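(* Let $E$ be a uniformly random simple $d$-regular graph on $\{1,\dots,N\}$ (identified with its edge set), and, conditionally on $E$, let $(\mathbf S,\mathbf s)=((S_1,\dots,S_d),(s_1,\dots,s_d))$ be uniform over $\mathcal S_1(E)\times\cdots\times\mathcal S_d(E)\times\{1,\dots,8\}^d$. Then $T_{\mathbf S,\mathbf s}(E)$ is a uniformly random simple $d$-regular graph.
   Context: For a set $S$ of edges, $[S]=\bigcup_{e\in S}e$ is its vertex set; for $B\subset\{1,\dots,N\}$, $E|_B=\{e\in E: e\subset B\}$. For each simple $d$-regular $E$, fix an enumeration $e_1(E),\dots,e_d(E)$ of the edges of $E$ incident to vertex $1$, and let $\mathcal S_\mu(E)$ be the set of subsets $S\subset E$ with $|S|=3$, $e_\mu(E)\in S$, and no edge of $S\setminus\{e_\mu(E)\}$ incident to $1$. For $S\subset E$ with $|S|=3$ let $I(E,S)=\mathbf 1\{|[S]|=6,\ E|_{[S]}=S\}$. For a 3-edge set $S$ with $|[S]|=6$, there are eight perfect matchings $S'$ of $[S]$ with $S\cap S'=\emptyset$; fix an enumeration $S'_1,\dots,S'_8$ of them and set $T_{S,s}(E)=(E\setminus S)\cup S'_s$. Given $(\mathbf S,\mathbf s)$ with $S_\mu\in\mathcal S_\mu(E)$, define $I_\mu=I(E,S_\mu)$, $J_\mu=\mathbf 1\{[S_\mu]\cap[S_\nu]=\{1\}\text{ for all }\nu\neq\mu\}$, $W=\{\mu\in\{1,\dots,d\}: I_\mu J_\mu=1\}$, and $T_{\mathbf S,\mathbf s}(E)=(T_{S_{\mu_1},s_{\mu_1}}\circ\cdots\circ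 T_{S_{\mu_k},s_{\mu_k}})(E)$ where $\mu_1,\dots,\mu_k$ enumerates $W$ (this does not depend on the order; equivalently, each $S_\mu$ with $\mu\in W$ is replaced by the corresponding matching $S'_{s_\mu}$ of $[S_\mu]$). *)

From HB Require Import structures.
From mathcomp Require Import all_boot all_order all_algebra.
Set Implicit Arguments. Unset Strict Implicit. Unset Printing Implicit Defensive.
Import Order.TTheory GRing.Theory Num.Theory.

Section Defs.
Variables (V : finType) (v1 : V) (d : nat).

Notation graph := {set {set V}}.

Definition regular (E : graph) : bool :=
  [forall e in E, #|e| == 2] && [forall v : V, #|[set e in E | v \in e]| == d].

Definition reg_graphs : {set graph} := [set E | regular E].

(* [eE E] is a fixed enumeration e_1(E),...,e_d(E) of the edges of E at v1 *)
Definition edge_enum_ok (eE : graph -> 'I_d -> {set V}) : Prop :=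
  forall E, regular E ->
    injective (eE E) /\ [set eE E mu | mu : 'I_d] = [set e in E | v1 \in e].

Definition Sset (eE : graph -> 'I_d -> {set V}) (E : graph) (mu : 'I_d)
  : {set graph} :=
  [set S : graph | [&& S \subset E, #|S| == 3, eE E mu \in S &
     [forall e in S, (e != eE E mu) ==> (v1 \notin e)]]].

Definition Iind (E S : graph) : bool :=
  (#|cover S| == 6) && ([set e in E | e \subset cover S] == S).

Definition perfect_matching (B : {set V}) (M : graph) : bool :=
  partition M B && [forall e in M, #|e| == 2].

(* [Mt S] is a fixed enumeration S'_1,...,S'_8 of the perfect matchings of [S]
   disjoint from S, for every 3-edge set S with |[S]| = 6 *)
Definition matching_enum_ok (Mt : graph -> 'I_8 -> graph) : Prop :=
  forall S : graph, #|S| = 3 -> (forall e, e \in S -> #|e| = 2) ->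
    #|cover S| = 6 ->
    injective (Mt S) /\
    [set Mt S s | s : 'I_8] =
      [set S' : graph | perfect_matching (cover S) S' & [disjoint S' & S]].

Definition Tstep (Mt : graph -> 'I_8 -> graph) (E S : graph) (s : 'I_8) : graph :=
  (E :\: S) :|: Mt S s.

Definition Jind (S : {ffun 'I_d -> graph}) (mu : 'I_d) : bool :=
  [forall nu : 'I_d, (nu != mu) ==> (cover (S mu) :&: cover (S nu) == [set v1])].

Definition Wset (E : graph) (S : {ffun 'I_d -> graph}) : seq 'I_d :=
  [seq mu <- enum 'I_d | Iind E (S mu) && Jind S mu].

Definition Tfull (Mt : graph -> 'I_8 -> graph) (E : graph)
  (S : {ffun 'I_d -> graph}) (s : {ffun 'I_d -> 'I_8}) : graph :=
  foldr (fun mu F => Tstep Mt F (S mu) (s mu)) E (Wset E S).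

(* P(T_{S,s}(E) = F) where E is uniform over simple d-regular graphs and,
   given E, (S,s) is uniform over S_1(E) x ... x S_d(E) x {1..8}^d *)
Definition prob_T (eE : graph -> 'I_d -> {set V}) (Mt : graph -> 'I_8 -> graph)
  (F : graph) : rat :=
  \sum_(E in reg_graphs)
   \sum_(S : {ffun 'I_d -> graph} | [forall mu, S mu \in Sset eE E mu])
    \sum_(s : {ffun 'I_d -> 'I_8})
      ((#|reg_graphs|%:R)^-1 * (\prod_(mu : 'I_d) (#|Sset eE E mu|%:R))^-1
        * ((8 ^ d)%:R)^-1 * (Tfull Mt E S s == F)%:R)%R.

End Defs.

From HB Require Import structures.
From mathcomp Require Import all_boot all_order all_algebra.
Import GRing.Theory Num.Theory.
Set Implicit Arguments. Unset Strict Implicit. Unset Printing Implicit Defensive.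

(* Call (E, S, s) admissible when E is simple d-regular and S_mu lies in
   S_mu(E) for every mu.  Switching sends it to (T, S', s'): T = T_{S,s}(E),
   the parts of S' are the matchings S'_{s_mu} (for mu in W) or S_mu (for mu
   not in W), re-indexed by the edges of T at vertex 1, and s' selects S_mu
   among the matchings of [S_mu] disjoint from S'_{s_mu}.  Because J keeps the
   vertex sets of distinct parts apart except at vertex 1, the switches do not
   interact: T is d-regular (each switched part is replaced by another perfect
   matching of the same six vertices), I and J hold for the new parts exactly
   when they held for the old ones, and switching (T, S', s') gives back
   (E, S, s).  So switching is an involution of the admissible triples.  As
   |S_mu(E)| = C(Nd/2 - d, 2) for every d-regular E, all admissible triples are
   equally likely, and the involution gives P(T = F) = P(E = F). *)

Section Finsets.
Variable T : finType.
Implicit Types (A C : {set T}) (M : {set {set T}}).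

Lemma sub_cover M e : e \in M -> e \subset cover M.
Proof. by move=> eM; apply: (bigcup_sup e eM). Qed.

Lemma card_sep_sum A (p : pred T) : #|[set x in A | p x]| = \sum_x ((x \in A) * p x).
Proof.
rewrite -sum1dep_card big_mkcond /=; apply: eq_bigr => x _.
by case: (x \in A); case: (p x).
Qed.

Lemma card_sep_split (I : finType) (P : pred I) A C (B : I -> {set T}) (p : pred T) :
  (forall x, (x \in A : nat) = (x \in C) + \sum_(i | P i) (x \in B i)) ->
  #|[set x in A | p x]| = #|[set x in C | p x]| + \sum_(i | P i) #|[set x in B i | p x]|.
Proof.
move=> splitA; rewrite !card_sep_sum.
under eq_bigr => x _ do rewrite splitA mulnDl big_distrl /=.
rewrite big_split /= exchange_big /=; congr (_ + _).
by apply: eq_bigr => i _; rewrite card_sep_sum.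
Qed.

Lemma card_ffun_family (I : finType) (B : I -> {set T}) :
  #|[set f : {ffun I -> T} | [forall i, f i \in B i]]| = \prod_i #|B i|.
Proof.
rewrite (eq_card (B := family B)) => [|f]; last by rewrite inE; apply/forallP/familyP.
by rewrite card_family foldrE big_map /image_mem big_enum_cond.
Qed.

Lemma forall_bijective (I : finType) (f : I -> I) (P : pred I) : bijective f ->
  [forall x, P (f x)] = [forall x, P x].
Proof.
case=> g fK gK; apply/forallP/forallP=> Pf x; last exact: Pf.
by rewrite -(gK x); apply: Pf.
Qed.

Lemma exists_bijective (I : finType) (f : I -> I) (P : pred I) : bijective f ->
  [exists x, P (f x)] = [exists x, P x].
Proof.
case=> g fK gK; apply/existsP/existsP=> [[x Pfx]|[x Px]]; first by exists (f x).
by exists (g x); rewrite gK.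
Qed.

Lemma perfect_matching_cover C M : perfect_matching C M -> cover M = C.
Proof. by case/andP=> /and3P[/eqP]. Qed.

Lemma perfect_matching_trivIset C M : perfect_matching C M -> trivIset M.
Proof. by case/andP=> /and3P[]. Qed.

Lemma perfect_matching_card_edge C M e : perfect_matching C M -> e \in M -> #|e| = 2.
Proof. by case/andP=> _ /forallP /(_ e) /implyP h /h /eqP. Qed.

Lemma perfect_matching_card C M : perfect_matching C M -> #|M| * 2 = #|C|.
Proof.
move=> pmM; have := perfect_matching_trivIset pmM.
rewrite /trivIset (perfect_matching_cover pmM) => /eqP <-.
by rewrite (eq_bigr (fun _ => 2)) ?sum_nat_const // => e /(perfect_matching_card_edge pmM).
Qed.

Lemma perfect_matching_edge_uniq C M e e' v : perfect_matching C M ->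
  e \in M -> e' \in M -> v \in e -> v \in e' -> e = e'.
Proof.
move=> /perfect_matching_trivIset tM eM e'M ve ve'.
by rewrite -(def_pblock tM eM ve) (def_pblock tM e'M ve').
Qed.

Lemma perfect_matching_deg C M v : perfect_matching C M ->
  #|[set e in M | v \in e]| = (v \in C).
Proof.
move=> pmM; have tM := perfect_matching_trivIset pmM.
rewrite -(perfect_matching_cover pmM); case vM: (v \in cover M).
  rewrite (_ : [set e in M | v \in e] = [set pblock M v]) ?cards1 //.
  apply/setP=> e; rewrite !inE; apply/idP/eqP => [/andP[eM ve]|->].
    by rewrite (def_pblock tM eM ve).
  by rewrite pblock_mem // mem_pblock.
apply/eqP; rewrite cards_eq0; apply/eqP/setP=> e; rewrite !inE.
by apply/negP=> /andP[eM ve]; move/negP: vM; apply; rewrite (subsetP (sub_cover eM)).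
Qed.

Lemma perfect_matching3 M :
  #|M| = 3 -> (forall e, e \in M -> #|e| = 2) -> #|cover M| = 6 ->
  perfect_matching (cover M) M.
Proof.
move=> M3 M2 C6; rewrite /perfect_matching /partition eqxx /=.
apply/andP; split; last by apply/forallP=> e; apply/implyP=> /M2 ->.
apply/andP; split; last by apply/negP=> /M2; rewrite cards0.
by rewrite /trivIset C6 (eq_bigr (fun _ => 2)) ?sum_nat_const ?M3 // => e /M2.
Qed.

End Finsets.

Section RegularGraphs.
Variables (V : finType) (d : nat).
Implicit Type E : {set {set V}}.

Lemma regular_card_edge E e : regular d E -> e \in E -> #|e| = 2.
Proof. by case/andP=> /forallP /(_ e) /implyP h _ /h /eqP. Qed.

Lemma regular_deg E v : regular d E -> #|[set e in E | v \in e]| = d.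
Proof. by case/andP=> _ /forallP /(_ v) /eqP. Qed.

Lemma regular_card E : regular d E -> #|E| * 2 = #|V| * d.
Proof.
move=> rE.
have -> : #|V| * d = \sum_v #|[set e in E | v \in e]|.
  by rewrite (eq_bigr (fun _ => d)) ?sum_nat_const // => v _; rewrite regular_deg.
under eq_bigr => v _ do rewrite card_sep_sum.
rewrite exchange_big /= -sum1_card big_distrl big_mkcond /=; apply: eq_bigr => e _.
case: (boolP (e \in E)) => [eE|_]; last by rewrite big1.
under eq_bigr => v _ do rewrite mul1n.
rewrite mul1n -(regular_card_edge rE eE) -sum1_card big_mkcond /=.
by apply: eq_bigr => v _; case: (v \in e).
Qed.

Variables (v1 : V) (eE : {set {set V}} -> 'I_d -> {set V}).
Hypothesis heE : edge_enum_ok v1 eE.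

Lemma edge_enum_inj E : regular d E -> injective (eE E).
Proof. by case/heE. Qed.

Lemma edge_enum_at_v1 E mu : regular d E -> eE E mu \in [set e in E | v1 \in e].
Proof. by case/heE=> _ <-; apply: imset_f. Qed.

Lemma edge_enum_mem E mu : regular d E -> eE E mu \in E.
Proof. by move/(edge_enum_at_v1 mu); rewrite inE => /andP[]. Qed.

Lemma edge_enum_v1 E mu : regular d E -> v1 \in eE E mu.
Proof. by move/(edge_enum_at_v1 mu); rewrite inE => /andP[]. Qed.

Lemma edge_enum_onto E e : regular d E -> e \in E -> v1 \in e -> exists mu, e = eE E mu.
Proof.
case/heE=> _ img eE' ve; have : e \in [set e in E | v1 \in e] by rewrite inE eE' ve.
by rewrite -img => /imsetP[mu _ ->]; exists mu.
Qed.

(* An element of S_mu(E) is e_mu(E) together with two of the #|E| - d edges avoiding vertex 1. *)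
Lemma card_Sset E mu : regular d E -> #|Sset v1 eE E mu| = 'C(#|E| - d, 2).
Proof.
move=> rE; set e0 := eE E mu; set E' := [set e in E | v1 \notin e].
have e0E' : e0 \notin E' by rewrite inE edge_enum_v1 ?andbF.
have cardE' : #|E'| = #|E| - d.
  rewrite -(regular_deg v1 rE) -(cardsID [set e : {set V} | v1 \in e] E).
  have -> : E :&: [set e : {set V} | v1 \in e] = [set e in E | v1 \in e].
    by apply/setP=> e; rewrite !inE.
  have -> : E :\: [set e : {set V} | v1 \in e] = E' by apply/setP=> e; rewrite !inE andbC.
  by rewrite addKn.
have -> : Sset v1 eE E mu =
    (fun P => e0 |: P) @: [set P : {set {set V}} | P \subset E' & #|P| == 2].
  apply/setP=> S; rewrite inE; apply/idP/imsetP => [/and4P[SE S3 e0S Sv1]|[P]].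
    exists (S :\ e0); last by rewrite setD1K.
    move: S3; rewrite (cardsD1 e0) e0S add1n eqSS inE => ->; rewrite andbT.
    apply/subsetP=> e; rewrite !inE => /andP[ne eS].
    by rewrite (subsetP SE) // (implyP (implyP (forallP Sv1 e) eS) ne).
  rewrite inE => /andP[PE' /eqP P2] ->.
  have e0P : e0 \notin P by apply: contra e0E' => /(subsetP PE').
  apply/and4P; split; rewrite ?setU11 ?cardsU1 ?e0P ?P2 //.
    apply/subsetP=> e; rewrite in_setU1 => /orP[/eqP -> |/(subsetP PE')].
      exact: edge_enum_mem.
    by rewrite inE => /andP[].
  apply/forallP=> e; rewrite in_setU1; apply/implyP => /orP[/eqP -> |eP].
    by rewrite eqxx.
  by apply/implyP=> _; move: (subsetP PE' e eP); rewrite inE => /andP[].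
rewrite card_in_imset; first by rewrite cards_draws cardE'.
move=> P Q; rewrite !inE => /andP[PE' _] /andP[QE' _] PQ.
have e0P : e0 \notin P by apply: contra e0E' => /(subsetP PE').
have e0Q : e0 \notin Q by apply: contra e0E' => /(subsetP QE').
by rewrite -(setU1K e0P) -(setU1K e0Q) PQ.
Qed.

End RegularGraphs.

Section Switching.
Variables (V : finType) (v1 : V) (d : nat).
Variable eE : {set {set V}} -> 'I_d -> {set V}.
Variable Mt : {set {set V}} -> 'I_8 -> {set {set V}}.
Hypothesis heE : edge_enum_ok v1 eE.
Hypothesis hMt : matching_enum_ok Mt.

Local Notation graph := {set {set V}}.
Local Notation fS := {ffun 'I_d -> graph}.
Local Notation fs := {ffun 'I_d -> 'I_8}.
Implicit Types (E : graph) (S : fS) (s : fs).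

Definition admissible E S := regular d E && [forall mu, S mu \in Sset v1 eE E mu].

Definition active E S mu := Iind E (S mu) && Jind v1 S mu.

Definition untouched E S := [set e in E | [forall mu, active E S mu ==> (e \notin S mu)]].

Definition new_part E S s mu := if active E S mu then Mt (S mu) (s mu) else S mu.

Definition back_index E S s mu :=
  if active E S mu then odflt (s mu) [pick t | Mt (new_part E S s mu) t == S mu]
  else s mu.

(* The parts of the switched triple are the [new_part]s, re-indexed so that
   the nu-th one contains e_nu of the switched graph. *)
Definition relabel E S s nu :=
  odflt nu [pick mu | eE (Tfull v1 Mt E S s) nu \in new_part E S s mu].

Definition switch_parts E S s : fS := [ffun nu => new_part E S s (relabel E S s nu)].

Definition switch_indices E S s : fs := [ffun nu => back_index E S s (relabel E S s nu)].

Definition switching (x : graph * (fS * fs)) : graph * (fS * fs) :=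
  let: (G, (P, t)) := x in
  if admissible G P then (Tfull v1 Mt G P t, (switch_parts G P t, switch_indices G P t))
  else x.

Lemma Jind_separated S mu nu (e : {set V}) : Jind v1 S nu -> mu != nu ->
  e \subset cover (S mu) -> e \subset cover (S nu) -> #|e| = 2 -> False.
Proof.
move=> /forallP /(_ mu) /implyP; rewrite eq_sym => J /J /eqP capv1 eSmu eSnu e2.
have : e \subset [set v1] by rewrite -capv1 subsetI eSnu eSmu.
by move/subset_leq_card; rewrite cards1 e2.
Qed.

Lemma mem_Wset E S mu : (mu \in Wset v1 E S) = active E S mu.
Proof. by rewrite mem_filter mem_enum andbT. Qed.

Lemma all_Wset E S (p : pred 'I_d) : all p (Wset v1 E S) = [forall mu, active E S mu ==> p mu].
Proof.
apply/allP/forallP=> h mu; first by apply/implyP; rewrite -mem_Wset; apply: h.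
by rewrite mem_Wset; apply/implyP/h.
Qed.

Lemma has_Wset E S (p : pred 'I_d) : has p (Wset v1 E S) = [exists mu, active E S mu && p mu].
Proof.
apply/hasP/existsP=> [[mu]|[mu /andP[]]]; rewrite ?mem_Wset; first by exists mu; apply/andP.
by exists mu; rewrite ?mem_Wset.
Qed.

Section Admissible.
Variables (E : graph) (S : fS) (s : fs).
Hypothesis admES : admissible E S.

Local Notation TE := (Tfull v1 Mt E S s).
Local Notation N := (new_part E S s).
Local Notation W := (active E S).

Lemma admissible_regular : regular d E.
Proof. by case/andP: admES. Qed.

Lemma part_Sset mu : S mu \in Sset v1 eE E mu.
Proof. by case/andP: admES => _ /forallP. Qed.

Lemma part_sub mu : S mu \subset E.
Proof. by have := part_Sset mu; rewrite inE => /and4P[]. Qed.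

Lemma card_part mu : #|S mu| = 3.
Proof. by have := part_Sset mu; rewrite inE => /and4P[_ /eqP]. Qed.

Lemma edge_enum_part mu : eE E mu \in S mu.
Proof. by have := part_Sset mu; rewrite inE => /and4P[]. Qed.

Lemma part_edge_v1 mu (e : {set V}) : e \in S mu -> v1 \in e -> e = eE E mu.
Proof.
have := part_Sset mu; rewrite inE => /and4P[_ _ _ /forallP /(_ e) /implyP Sv1] eS ve.
by apply/eqP; apply: contraLR ve => /(implyP (Sv1 eS)).
Qed.

Lemma card_part_edge mu (e : {set V}) : e \in S mu -> #|e| = 2.
Proof. by move/(subsetP (part_sub mu)); apply: regular_card_edge admissible_regular. Qed.

Lemma active_Iind mu : W mu -> Iind E (S mu).
Proof. by case/andP. Qed.

Lemma active_cover6 mu : W mu -> #|cover (S mu)| = 6.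
Proof. by move/active_Iind/andP=> [/eqP]. Qed.

Lemma active_restrict mu : W mu -> [set e in E | e \subset cover (S mu)] = S mu.
Proof. by move/active_Iind/andP=> [_ /eqP]. Qed.

Lemma active_Jind mu : W mu -> Jind v1 S mu.
Proof. by case/andP. Qed.

Lemma part_perfect_matching mu : W mu -> perfect_matching (cover (S mu)) (S mu).
Proof.
by move=> Wmu; apply: perfect_matching3 (card_part mu) (@card_part_edge mu) (active_cover6 Wmu).
Qed.

Lemma Mt_part mu : W mu ->
  injective (Mt (S mu)) /\ [set Mt (S mu) t | t : 'I_8] =
    [set S' : graph | perfect_matching (cover (S mu)) S' & [disjoint S' & S mu]].
Proof. by move=> Wmu; apply: hMt (card_part mu) (@card_part_edge mu) (active_cover6 Wmu). Qed.

Lemma new_part_active mu : W mu -> N mu = Mt (S mu) (s mu).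
Proof. by rewrite /new_part => ->. Qed.

Lemma new_part_inactive mu : ~~ W mu -> N mu = S mu.
Proof. by rewrite /new_part => /negbTE ->. Qed.

Lemma new_part_matching mu : W mu ->
  perfect_matching (cover (S mu)) (N mu) && [disjoint N mu & S mu].
Proof.
move=> Wmu; have [_ img] := Mt_part Wmu; rewrite new_part_active //.
have : Mt (S mu) (s mu) \in [set Mt (S mu) t | t : 'I_8] by apply: imset_f.
by rewrite img inE.
Qed.

Lemma cover_new_part mu : cover (N mu) = cover (S mu).
Proof.
have [Wmu|nWmu] := boolP (W mu); last by rewrite new_part_inactive.
by case/andP: (new_part_matching Wmu) => /perfect_matching_cover.
Qed.

Lemma card_new_part_edge mu (e : {set V}) : e \in N mu -> #|e| = 2.
Proof.
have [Wmu|nWmu] := boolP (W mu); last by rewrite new_part_inactive //; apply: card_part_edge.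
by case/andP: (new_part_matching Wmu) => pmN _; apply: perfect_matching_card_edge pmN.
Qed.

Lemma card_new_part mu : #|N mu| = 3.
Proof.
have [Wmu|nWmu] := boolP (W mu); last by rewrite new_part_inactive // card_part.
case/andP: (new_part_matching Wmu) => /perfect_matching_card.
by rewrite active_cover6 // -[6]/(3 * 2) => /eqP; rewrite eqn_mul2r => /eqP.
Qed.

Lemma new_part_sub_cover mu (e : {set V}) : e \in N mu -> e \subset cover (S mu).
Proof. by rewrite -cover_new_part; apply: sub_cover. Qed.

Lemma new_part_notin mu (e : {set V}) : W mu -> e \in N mu -> e \notin E.
Proof.
move=> Wmu eN; apply/negP=> eEd.
have eS : e \in S mu by rewrite -(active_restrict Wmu) inE eEd (new_part_sub_cover eN).
by case/andP: (new_part_matching Wmu) => _ /disjointFr/(_ eN); rewrite eS.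
Qed.

Lemma new_part_separated mu nu (e : {set V}) : W nu -> mu != nu ->
  e \in N nu -> e \subset cover (S mu) -> False.
Proof.
move=> Wnu ne eN eSmu.
exact: Jind_separated (active_Jind Wnu) ne eSmu (new_part_sub_cover eN) (card_new_part_edge eN).
Qed.

Lemma mem_foldr_Tstep (l : seq 'I_d) (e : {set V}) : uniq l -> all W l ->
  (e \in foldr (fun mu F => Tstep Mt F (S mu) (s mu)) E l) =
  ((e \in E) && all (fun mu => e \notin S mu) l) || has (fun mu => e \in N mu) l.
Proof.
elim: l => [|mu l IHl] /=; first by rewrite andbT orbF.
case/andP=> mu_l ul /andP[Wmu Wl]; rewrite /Tstep in_setU in_setD IHl // -(new_part_active Wmu).
case: (boolP (has _ l)) => [/hasP[nu nu_l eN]|_]; last first.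
  by rewrite !orbF; case: (e \in S mu); case: (e \in E); case: (all _ l); case: (e \in N mu).
have eSmu : e \notin S mu.
  apply/negP=> /sub_cover; apply: new_part_separated eN; first exact: (allP Wl).
  by apply: contraNneq mu_l => ->.
by rewrite eSmu !orbT.
Qed.

Lemma mem_Tfull (e : {set V}) : (e \in TE) =
  ((e \in E) && [forall mu, W mu ==> (e \notin S mu)]) ||
  [exists mu, W mu && (e \in N mu)].
Proof.
rewrite /Tfull mem_foldr_Tstep ?all_Wset ?has_Wset //; last by apply/forallP=> mu; apply/implyP.
by rewrite filter_uniq // enum_uniq.
Qed.

Lemma new_part_sub_Tfull mu : N mu \subset TE.
Proof.
apply/subsetP=> e eN; rewrite mem_Tfull.
have [Wmu|nWmu] := boolP (W mu); first by apply/orP; right; apply/existsP; exists mu; rewrite Wmu.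
move: eN; rewrite new_part_inactive // => eS; rewrite (subsetP (part_sub mu)) //=.
apply/orP; left; apply/forallP=> nu; apply/implyP=> Wnu; apply/negP=> eSnu.
have mu_nu : mu != nu by apply: contraNneq nWmu => ->.
exact: Jind_separated (active_Jind Wnu) mu_nu (sub_cover eS) (sub_cover eSnu) (card_part_edge eS).
Qed.

Lemma card_Tfull_edge (e : {set V}) : e \in TE -> #|e| = 2.
Proof.
rewrite mem_Tfull => /orP[/andP[eEd _]|/existsP[mu /andP[_ eN]]].
  exact: regular_card_edge admissible_regular eEd.
exact: card_new_part_edge eN.
Qed.

Lemma indicator_Tfull (e : {set V}) :
  (e \in TE : nat) = (e \in untouched E S) + \sum_(mu | W mu) (e \in N mu).
Proof.
have [/existsP[mu /andP[Wmu eN]]|noN] := boolP [exists mu, W mu && (e \in N mu)].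
  rewrite (subsetP (new_part_sub_Tfull mu)) // inE (negbTE (new_part_notin Wmu eN)).
  rewrite (bigD1 mu) //= eN big1 // => nu /andP[Wnu nu_mu].
  have -> // : (e \in N nu) = false.
  apply/negP=> eNnu; rewrite eq_sym in nu_mu.
  exact: new_part_separated Wnu nu_mu eNnu (new_part_sub_cover eN).
rewrite mem_Tfull (negbTE noN) orbF inE big1 ?addn0 // => nu Wnu.
have -> // : (e \in N nu) = false.
by apply: contraNF noN => eN; apply/existsP; exists nu; rewrite Wnu.
Qed.

Lemma indicator_E (e : {set V}) :
  (e \in E : nat) = (e \in untouched E S) + \sum_(mu | W mu) (e \in S mu).
Proof.
have [/existsP[mu /andP[Wmu eS]]|noS] := boolP [exists mu, W mu && (e \in S mu)].
  rewrite inE (subsetP (part_sub mu)) // (bigD1 mu) //= eS big1 ?addn0.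
    rewrite (_ : [forall _, _] = false) //; apply: negbTE.
    by apply/forallPn; exists mu; rewrite Wmu eS.
  move=> nu /andP[Wnu nu_mu]; have -> // : (e \in S nu) = false.
  apply/negP=> eSnu; rewrite eq_sym in nu_mu.
  exact: Jind_separated (active_Jind Wnu) nu_mu (sub_cover eS) (sub_cover eSnu) (card_part_edge eS).
rewrite inE big1 ?addn0 => [|nu Wnu].
  rewrite (_ : [forall _, _] = true) ?andbT //; apply/forallP=> mu; apply/implyP=> Wmu.
  by apply: contraNN noS => eS; apply/existsP; exists mu; rewrite Wmu.
have -> // : (e \in S nu) = false.
by apply: contraNF noS => eS; apply/existsP; exists nu; rewrite Wnu.
Qed.

(* Switching replaces each active part by a perfect matching of the same six
   vertices, so every degree is preserved. *)
Lemma regular_Tfull : regular d TE.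
Proof.
apply/andP; split; first by apply/forallP=> e; apply/implyP=> /card_Tfull_edge ->.
apply/forallP=> v; apply/eqP.
rewrite -[RHS](regular_deg v admissible_regular) (card_sep_split _ indicator_E).
rewrite (card_sep_split _ indicator_Tfull); congr (_ + _); apply: eq_bigr => mu Wmu.
case/andP: (new_part_matching Wmu) => pmN _.
by rewrite (perfect_matching_deg v pmN) (perfect_matching_deg v (part_perfect_matching Wmu)).
Qed.

Lemma Tfull_v1 (e : {set V}) : e \in TE -> v1 \in e -> exists mu, e \in N mu.
Proof.
rewrite mem_Tfull => /orP[/andP[eEd untouched_e] ve|/existsP[mu /andP[_ eN]] _]; last by exists mu.
have [mu e_mu] := edge_enum_onto heE admissible_regular eEd ve; subst e; exists mu.
rewrite new_part_inactive ?edge_enum_part //.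
by apply: contraTN untouched_e => Wmu; apply/forallPn; exists mu; rewrite Wmu edge_enum_part.
Qed.

Lemma new_part_v1_edge_uniq mu (e e' : {set V}) : e \in N mu -> e' \in N mu ->
  v1 \in e -> v1 \in e' -> e = e'.
Proof.
have [Wmu|nWmu] := boolP (W mu).
  by case/andP: (new_part_matching Wmu) => pmN _; apply: perfect_matching_edge_uniq pmN.
rewrite !new_part_inactive // => eS eS' ve ve'.
by rewrite (part_edge_v1 eS ve) (part_edge_v1 eS' ve').
Qed.

Local Notation sigma := (relabel E S s).

Lemma relabelP nu : eE TE nu \in N (sigma nu).
Proof.
rewrite /relabel; case: pickP => [mu //|noN] /=; exfalso.
have [mu eN] := Tfull_v1 (edge_enum_mem heE nu regular_Tfull) (edge_enum_v1 heE nu regular_Tfull).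
by move: (noN mu); rewrite eN.
Qed.

Lemma relabel_inj : injective sigma.
Proof.
move=> nu nu' sigma_eq; apply: (edge_enum_inj heE regular_Tfull).
have := relabelP nu'; rewrite -sigma_eq => eN'.
have v1_e := edge_enum_v1 heE _ regular_Tfull.
exact: new_part_v1_edge_uniq (relabelP nu) eN' (v1_e nu) (v1_e nu').
Qed.

Lemma relabel_bij : bijective sigma.
Proof. exact: injF_bij relabel_inj. Qed.

Local Notation S' := (switch_parts E S s).
Local Notation s' := (switch_indices E S s).

Lemma admissible_switch : admissible TE S'.
Proof.
rewrite /admissible regular_Tfull; apply/forallP=> nu.
rewrite ffunE inE new_part_sub_Tfull card_new_part relabelP /=.
apply/forallP=> e; apply/implyP=> eN; apply/implyP=> e_ne; apply/negP=> ve.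
move/eqP: e_ne; apply.
exact: new_part_v1_edge_uniq eN (relabelP nu) ve (edge_enum_v1 heE nu regular_Tfull).
Qed.

Lemma mem_Tfull_cover mu (e : {set V}) : e \subset cover (S mu) ->
  (e \in TE) = (if W mu then e \in N mu else e \in E).
Proof.
move=> eC; have [Wmu|nWmu] := boolP (W mu); apply/idP/idP.
- rewrite mem_Tfull => /orP[/andP[eEd untouched_e]|/existsP[nu /andP[Wnu eN]]].
    have : e \in S mu by rewrite -(active_restrict Wmu) inE eEd eC.
    by move: (implyP (forallP untouched_e mu) Wmu) => /negP.
  case: (eqVneq mu nu) => [-> //|mu_nu].
  by case: (new_part_separated Wnu mu_nu eN eC).
- exact: (subsetP (new_part_sub_Tfull mu)).
- rewrite mem_Tfull => /orP[/andP[] //|/existsP[nu /andP[Wnu eN]]].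
  have mu_nu : mu != nu by apply: contraNneq nWmu => ->.
  by case: (new_part_separated Wnu mu_nu eN eC).
- move=> eEd; rewrite mem_Tfull eEd /=; apply/orP; left.
  apply/forallP=> nu; apply/implyP=> Wnu; apply/negP=> eS.
  have mu_nu : mu != nu by apply: contraNneq nWmu => ->.
  have e2 := regular_card_edge admissible_regular eEd.
  exact: Jind_separated (active_Jind Wnu) mu_nu eC (sub_cover eS) e2.
Qed.

Lemma Iind_switch mu : Iind TE (N mu) = Iind E (S mu).
Proof.
rewrite /Iind cover_new_part; have [Wmu|nWmu] := boolP (W mu).
  case/andP: (active_Iind Wmu) => -> /eqP ->; rewrite eqxx /=; apply/eqP/setP=> e.
  rewrite inE; case: (boolP (e \subset cover (S mu))) => [eC|neC].
    by rewrite (mem_Tfull_cover eC) Wmu andbT.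
  by rewrite andbF; apply/esym; apply: contraNF neC => /new_part_sub_cover.
rewrite new_part_inactive //; congr (_ && (_ == _)); apply/setP=> e; rewrite !inE.
case: (boolP (e \subset cover (S mu))) => [eC|]; last by rewrite !andbF.
by rewrite (mem_Tfull_cover eC) (negbTE nWmu).
Qed.

Lemma Jind_switch nu : Jind v1 S' nu = Jind v1 S (sigma nu).
Proof.
rewrite /Jind -[RHS](forall_bijective _ relabel_bij); apply: eq_forallb => mu.
by rewrite !ffunE !cover_new_part (inj_eq relabel_inj).
Qed.

Lemma active_switch nu : active TE S' nu = W (sigma nu).
Proof. by rewrite /active Jind_switch ffunE Iind_switch. Qed.

Lemma Mt_back_index mu : W mu -> Mt (N mu) (back_index E S s mu) = S mu.
Proof.
move=> Wmu; rewrite /back_index Wmu; case: pickP => [t /eqP //|noS]; exfalso.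
have N6 : #|cover (N mu)| = 6 by rewrite cover_new_part active_cover6.
have [_ img] := hMt (card_new_part mu) (@card_new_part_edge mu) N6.
have : S mu \in [set Mt (N mu) t | t : 'I_8].
  rewrite img inE cover_new_part part_perfect_matching //= disjoint_sym.
  by case/andP: (new_part_matching Wmu).
by case/imsetP=> t _ St; move: (noS t); rewrite St eqxx.
Qed.

Lemma new_part_switch nu : new_part TE S' s' nu = S (sigma nu).
Proof.
rewrite /new_part active_switch !ffunE.
by case: (boolP (W (sigma nu))) => [/Mt_back_index|/new_part_inactive].
Qed.

Lemma back_index_switch nu : back_index TE S' s' nu = s (sigma nu).
Proof.
rewrite /back_index active_switch new_part_switch !ffunE.
have [Wmu|nWmu] := boolP (W (sigma nu)); last by rewrite /back_index (negbTE nWmu).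
rewrite new_part_active //; case: pickP => [t /eqP|/(_ (s (sigma nu)))] /=.
  by apply: (proj1 (Mt_part Wmu)).
by rewrite eqxx.
Qed.

End Admissible.

Section Involution.
Variables (E : graph) (S : fS) (s : fs).
Hypothesis admES : admissible E S.

Local Notation TE := (Tfull v1 Mt E S s).
Local Notation S' := (switch_parts E S s).
Local Notation s' := (switch_indices E S s).
Local Notation W := (active E S).
Local Notation N := (new_part E S s).

Lemma Tfull_switch : Tfull v1 Mt TE S' s' = E.
Proof.
apply/setP=> e; rewrite (mem_Tfull s' (admissible_switch s admES)).
have -> : [forall nu, active TE S' nu ==> (e \notin S' nu)] = [forall mu, W mu ==> (e \notin N mu)].
  rewrite -[RHS](forall_bijective _ (relabel_bij s admES)); apply: eq_forallb => nu.
  by rewrite (active_switch s admES) ffunE.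
have -> : [exists nu, active TE S' nu && (e \in new_part TE S' s' nu)] =
          [exists mu, W mu && (e \in S mu)].
  rewrite -[RHS](exists_bijective _ (relabel_bij s admES)); apply: eq_existsb => nu.
  by rewrite (active_switch s admES) (new_part_switch s admES).
have [/existsP[mu /andP[Wmu eS]]|noS] := boolP [exists mu, W mu && (e \in S mu)].
  by rewrite orbT (subsetP (part_sub admES mu)).
rewrite orbF (mem_Tfull s admES); apply/idP/idP => [/andP[eT untouched_e]|eEd].
  case/orP: eT => [/andP[] //|/existsP[mu /andP[Wmu eN]]].
  by move: (implyP (forallP untouched_e mu) Wmu); rewrite eN.
rewrite eEd /= (_ : [forall _, _] = true) //=; last first.
  apply/forallP=> mu; apply/implyP=> Wmu.
  by apply: contraNN noS => eS; apply/existsP; exists mu; rewrite Wmu.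
apply/forallP=> mu; apply/implyP=> Wmu; apply/negP=> eN.
by move: (new_part_notin admES Wmu eN); rewrite eEd.
Qed.

Lemma relabelK mu : relabel E S s (relabel TE S' s' mu) = mu.
Proof.
have := relabelP s' (admissible_switch s admES) mu.
rewrite Tfull_switch (new_part_switch s admES) => eS.
apply: (edge_enum_inj heE (admissible_regular admES)); apply/esym.
exact: (part_edge_v1 admES eS (edge_enum_v1 heE mu (admissible_regular admES))).
Qed.

Lemma switch_partsK : switch_parts TE S' s' = S.
Proof. by apply/ffunP=> mu; rewrite ffunE (new_part_switch s admES) relabelK. Qed.

Lemma switch_indicesK : switch_indices TE S' s' = s.
Proof. by apply/ffunP=> mu; rewrite ffunE (back_index_switch s admES) relabelK. Qed.

End Involution.

Lemma admissible_switching x : admissible (switching x).1 (switching x).2.1 = admissible x.1 x.2.1.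
Proof.
case: x => E [S s] /=; case: (boolP (admissible E S)) => [admES|/negbTE //] /=.
exact: admissible_switch.
Qed.

Lemma switchingK : involutive switching.
Proof.
case=> E [S s] /=; case: (boolP (admissible E S)) => [admES|nadm] /=; last by rewrite (negbTE nadm).
by rewrite (admissible_switch s admES) Tfull_switch // switch_partsK // switch_indicesK.
Qed.

Lemma switching_fst x : admissible x.1 x.2.1 -> (switching x).1 = Tfull v1 Mt x.1 x.2.1 x.2.2.
Proof. by case: x => E [S s] /= ->. Qed.

End Switching.

Section Counting.
Variables (V : finType) (v1 : V) (d : nat).
Variable eE : {set {set V}} -> 'I_d -> {set V}.
Variable Mt : {set {set V}} -> 'I_8 -> {set {set V}}.
Hypothesis heE : edge_enum_ok v1 eE.
Hypothesis hMt : matching_enum_ok Mt.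

Local Notation graph := {set {set V}}.
Local Notation fS := {ffun 'I_d -> graph}.
Local Notation fs := {ffun 'I_d -> 'I_8}.
Local Notation K := 'C(#|V| * d %/ 2 - d, 2).

Lemma card_Sset_regular E mu : regular d E -> #|Sset v1 eE E mu| = K.
Proof. by move=> rE; rewrite card_Sset // -(regular_card rE) mulnK. Qed.

Lemma sum_admissible (f : graph -> fS -> fs -> nat) :
  \sum_(E in reg_graphs V d) \sum_(S : fS | [forall mu, S mu \in Sset v1 eE E mu])
     \sum_(s : fs) f E S s =
  \sum_(x | admissible v1 eE x.1 x.2.1) f x.1 x.2.1 x.2.2.
Proof.
under eq_bigr => E _ do
  rewrite (pair_big (fun S : fS => [forall mu, S mu \in Sset v1 eE E mu]) xpredT).
rewrite (pair_big_dep (mem (reg_graphs V d))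
  (fun E (p : fS * fs) => [forall mu, p.1 mu \in Sset v1 eE E mu] && true)
  (fun E (p : fS * fs) => f E p.1 p.2)) /=.
by apply: eq_bigl => x; rewrite inE andbT.
Qed.

Definition Tfull_count (F : graph) : nat :=
  \sum_(E in reg_graphs V d) \sum_(S : fS | [forall mu, S mu \in Sset v1 eE E mu])
    \sum_(s : fs) (Tfull v1 Mt E S s == F).

(* [switching] is an involution of the admissible triples that maps the graph
   to its switched graph, so it exchanges the events T = F and E = F. *)
Lemma Tfull_count_regular F : Tfull_count F = (if regular d F then K ^ d * 8 ^ d else 0).
Proof.
rewrite /Tfull_count sum_admissible.
rewrite (eq_bigr (fun x => (switching v1 eE Mt x).1 == F : nat)) => [|x adm_x]; last first.
  by rewrite switching_fst.
rewrite (reindex_inj (inv_inj (switchingK heE hMt))) /=.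
rewrite (eq_bigl (fun x => admissible v1 eE x.1 x.2.1)) => [|x]; last exact: admissible_switching.
under eq_bigr => x _ do rewrite (switchingK heE hMt).
rewrite -(sum_admissible (fun E S s => (E == F) : nat)).
case: (boolP (regular d F)) => [rF|nrF]; last first.
  rewrite big1 // => E; rewrite inE => rE; rewrite big1 // => S _; rewrite big1 // => s _.
  by case: eqP rE => // ->; rewrite (negbTE nrF).
rewrite (bigD1 F) ?inE //= [X in _ + X]big1 ?addn0 => [|E /andP[_ /negbTE EF]]; last first.
  by rewrite big1 // => S _; rewrite big1 // => s _; rewrite EF.
rewrite eqxx (eq_bigr (fun _ => 8 ^ d)) => [|S _]; last by rewrite sum1_card card_ffun !card_ord.
rewrite sum_nat_const; congr (_ * _).
rewrite (eq_card (B := [set S : fS | [forall mu, S mu \in Sset v1 eE F mu]])) => [|S].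
  rewrite card_ffun_family (eq_bigr (fun _ => K)) => [|mu _]; last exact: card_Sset_regular.
  by rewrite prod_nat_const card_ord.
by rewrite inE.
Qed.

Lemma prob_T_count F : prob_T v1 eE Mt F =
  ((#|reg_graphs V d|%:R)^-1 * ((K ^ d * 8 ^ d)%:R)^-1 * (Tfull_count F)%:R)%R.
Proof.
rewrite /prob_T /Tfull_count natr_sum big_distrr; apply: eq_bigr => E; rewrite inE => rE.
rewrite natr_sum big_distrr; apply: eq_bigr => S _.
rewrite natr_sum big_distrr; apply: eq_bigr => s _.
rewrite (eq_bigr (fun _ => K%:R%R)) => [|mu _]; last by rewrite card_Sset_regular.
by rewrite prodr_const card_ord natrM !natrX invfM !mulrA.
Qed.

End Counting.

Unset Implicit Arguments.
Set Strict Implicit.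

(* vertices {1,...,N} are 'I_N, vertex 1 is the ordinal 0 *)
Theorem lemma6p1 (N d : nat) (hN : (0 < N)%N)
  (eE : {set {set 'I_N}} -> 'I_d -> {set 'I_N})
  (Mt : {set {set 'I_N}} -> 'I_8 -> {set {set 'I_N}})
  (heE : edge_enum_ok (Ordinal hN) eE)
  (hMt : matching_enum_ok Mt)
  (hG : exists E : {set {set 'I_N}}, regular d E)
  (hS : forall (E : {set {set 'I_N}}) (mu : 'I_d),
          regular d E -> Sset (Ordinal hN) eE E mu != set0) :
  forall F : {set {set 'I_N}},
    prob_T (Ordinal hN) eE Mt F =
      (if regular d F then (#|reg_graphs 'I_N d|%:R)^-1 else 0)%R.
Proof.
move=> F; rewrite (prob_T_count Mt heE) (Tfull_count_regular heE hMt).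
case: (boolP (regular d F)) => [rF|_]; last by rewrite mulr0.
have count_gt0 : (0 < 'C(#|'I_N| * d %/ 2 - d, 2) ^ d * 8 ^ d)%N.
  rewrite muln_gt0 [0 < 8 ^ _]expn_gt0 andbT.
  have <- : \prod_(mu < d) #|Sset (Ordinal hN) eE F mu| = 'C(#|'I_N| * d %/ 2 - d, 2) ^ d.
    by rewrite (eq_bigr _ (fun mu _ => card_Sset_regular heE mu rF)) prod_nat_const (card_ord d).
  by apply: prodn_gt0 => mu; rewrite card_gt0 hS.
by rewrite -mulrA mulVf ?mulr1 // pnatr_eq0 -lt0n.
Qed.
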